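(* Let $\mathcal{R}$ be a field and $(\mathcal{C}^{\bullet},\partial)$ a bigraded cochain complex of $\mathcal{R}$-vector spaces as in the context. Then \[ B^{k}(\mathcal{C},\partial)\cong\bigoplus_{p+q=k}\mathcal{B}^{k}_{q}\cap\mathcal{C}^{p,q},\qquad Z^{k}(\mathcal{C},\partial)\cong\bigoplus_{p+q=k}\mathcal{Z}^{k}_{q}\cap\mathcal{C}^{p,q},\qquad H^{k}(\mathcal{C},\partial)\cong\bigoplus_{p+q=k}\frac{\mathcal{Z}^{k}_{q}\cap\mathcal{C}^{p,q}}{\mathcal{B}^{k}_{q}\cap\mathcal{C}^{p,q}}. \]
   Context: Setting: $\mathcal{C}^{k}=\bigoplus_{p+q=k}\mathcal{C}^{p,q}$ with $\mathcal{C}^{p,q}=\{0\}$ if $p<0$ or $q<0$; $\partial$ is linear of degree $1$, $\partial^{2}=0$, $\partial=\partial_{2,-1}+\partial_{1,0}+\partial_{0,1}$ with $\partial_{i,j}(\mathcal{C}^{p,q})\subseteq\mathcal{C}^{p+i,q+j}$. $G^{q}\mathcal{C}:=\bigoplus_{j\geq q}\mathcal{C}^{i,j}$ and $\pi_{q}:\mathcal{C}\to G^{q}\mathcal{C}$ is the projection along the bigrading. $\mathcal{N}^{p,q}:=\ker(\partial_{0,1}|_{\mathcal{C}^{p,q}})\cap\ker(\partial_{2,-1}|_{\mathcal{C}^{p,q}})$, $\mathcal{N}_{q}:=\bigoplus_{p}\mathcal{N}^{p-q,q}$ (degree-$m$ part $\mathcal{N}^{m-q,q}$), a subcomplex with differential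 $\overline{\partial}:=\partial|_{\mathcal{N}_q}$. $\mathcal{M}^{k}:=\{\eta\in\mathcal{C}^{k}\mid(\partial\eta)_{i,j}\in B^{k+1}(\mathcal{N}_{j},\overline{\partial})\ \forall\, i+j=k+1\}$, where $(\partial\eta)_{i,j}$ is the $\mathcal{C}^{i,j}$-component; $\mathcal{Z}^{k}_{q}:=\{\pi_{q}(\eta)\mid\eta\in\mathcal{M}^{k},\ \pi_{q}(\partial\eta)=0\}$; $\mathcal{B}^{k}_{q}:=\pi_{q}(B^{k}(\mathcal{C},\partial))$. *)

From HB Require Import structures.
From mathcomp Require Import all_boot all_order all_algebra.
Set Implicit Arguments. Unset Strict Implicit. Unset Printing Implicit Defensive.
Import Order.TTheory GRing.Theory Num.Theory.
Local Open Scope ring_scope.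

(* The total complex C = (+)_{p,q} C^{p,q} is modelled as an R-module V
   together with the family of projections e p q : V -> V onto C^{p,q}
   along the bigrading (p q : int; C^{p,q} = 0 when p < 0 or q < 0). *)

Section Bicomplex.
Variables (R : fieldType) (V : lmodType R).
Variable e : int -> int -> {linear V -> V}.
Variables d21 d10 d01 : {linear V -> V}.

Definition inC (p q : int) (x : V) : Prop := e p q x = x.
Definition inCk (k : int) (x : V) : Prop :=
  forall p q : int, p + q != k -> e p q x = 0.
Definition Dtot (x : V) : V := d21 x + d10 x + d01 x.

Record bigraded_complex : Prop := BigradedComplex {
  bc_neg : forall (p q : int) (x : V), (p < 0) || (q < 0) -> e p q x = 0;
  bc_orth : forall (p q p' q' : int) (x : V),
      e p q (e p' q' x) = if (p == p') && (q == q') then e p q x else 0;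
  bc_decomp : forall x : V, exists n : nat,
      x = \sum_(i < n) \sum_(j < n) e (nat_of_ord i)%:Z (nat_of_ord j)%:Z x;
  bc_d21 : forall (p q : int) (x : V), inC (p + 2) (q - 1) (d21 (e p q x));
  bc_d10 : forall (p q : int) (x : V), inC (p + 1) q (d10 (e p q x));
  bc_d01 : forall (p q : int) (x : V), inC p (q + 1) (d01 (e p q x));
  bc_DD : forall x : V, Dtot (Dtot x) = 0
}.

Definition Bk (k : int) (x : V) : Prop :=
  exists y, inCk (k - 1) y /\ x = Dtot y.
Definition Zk (k : int) (x : V) : Prop := inCk k x /\ Dtot x = 0.
Definition NN (p q : int) (x : V) : Prop :=
  inC p q x /\ d01 x = 0 /\ d21 x = 0.
(* B^m(N_j, \bar\partial) = \partial (N^{m-1-j, j}) (degree m-1 part of N_j) *)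
Definition BN (m j : int) (x : V) : Prop :=
  exists y, NN (m - 1 - j) j y /\ x = Dtot y.
Definition MM (k : int) (eta : V) : Prop :=
  inCk k eta /\
  forall i j : int, i + j = k + 1 -> BN (k + 1) j (e i j (Dtot eta)).
Definition inG (q : int) (y : V) : Prop :=
  forall i j : int, j < q -> e i j y = 0.
Definition is_proj (q : int) (x y : V) : Prop :=
  inG q y /\ forall i j : int, q <= j -> e i j (x - y) = 0.
Definition Zq (k q : int) (y : V) : Prop :=
  exists eta, MM k eta /\ is_proj q (Dtot eta) 0 /\ is_proj q eta y.
Definition Bq (k q : int) (y : V) : Prop :=
  exists x, Bk k x /\ is_proj q x y.
(* (+)_{p+q=k} (S q \cap C^{p,q}), realised inside C^k *)
Definition dsum (S : int -> V -> Prop) (k : int) (x : V) : Prop :=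
  inCk k x /\ forall p q : int, p + q = k -> S q (e p q x).

End Bicomplex.

Section Iso.
Variables (R : fieldType) (V : lmodType R).

Definition lin_iso (S T : V -> Prop) : Prop :=
  exists f : V -> V,
    [/\ forall (a : R) (x y : V), S x -> S y -> f (a *: x + y) = a *: f x + f y,
        forall x, S x -> T (f x),
        forall x y, S x -> S y -> f x = f y -> x = y &
        forall z, T z -> exists2 x, S x & f x = z].

(* Z/B and TZ/TB are isomorphic R-vector spaces; the isomorphism is
   described through a choice of representatives g : Z -> TZ. *)
Definition quot_iso (Z B TZ TB : V -> Prop) : Prop :=
  exists g : V -> V,
    [/\ forall x, Z x -> TZ (g x),
        forall (a : R) (x y : V), Z x -> Z y ->
          TB (g (a *: x + y) - (a *: g x + g y)),
        forall x y, Z x -> Z y -> (B (x - y) <-> TB (g x - g y)) &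
        forall z, TZ z -> exists2 x, Z x & TB (g x - z)].

End Iso.

(* Filter a subspace S of C^k by q-degree, F_q S = S ∩ ⊕_{j ≤ q} C^{k-j,j}, and let
   gr_q S ⊆ C^{k-q,q} be the image of F_q S under the projection onto C^{k-q,q}.
   Choosing linear sections of these leading-term maps and peeling off leading
   terms from the top q-degree down identifies S with ⊕_q gr_q S; the filtration
   is finite because C^{p,q} = 0 for p < 0 or q < 0.
   For S = B^k, gr_q S is B^k_q ∩ C^{k-q,q} by the definition of π_q.  For S = Z^k
   it is Z^k_q ∩ C^{k-q,q}: if η ∈ M^k and π_q(∂η) = 0, the components of ∂η in
   q-degrees j < q are boundaries ∂n_j with n_j ∈ N^{k-j,j}, and η - Σ_j n_j is a
   cocycle with the same component in q-degree q.
   Choosing the sections for Z^k to extend those for B^k (Zorn's lemma) makes the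
   isomorphism for Z^k carry B^k onto ⊕_q gr_q B^k, which gives the statement on
   cohomology. *)

From HB Require Import structures.
From mathcomp Require Import all_boot all_order all_algebra zify.
From mathcomp Require Import boolp classical_sets.
Import Order.TTheory GRing.Theory Num.Theory.
Set Implicit Arguments. Unset Strict Implicit. Unset Printing Implicit Defensive.
Local Open Scope ring_scope.
Local Open Scope classical_set_scope.

Section Subspace.
Variables (R : pzRingType) (V : lmodType R).

Record subspace (S : set V) : Prop := Subspace {
  subspace0 : S 0;
  subspaceP : forall a x y, S x -> S y -> S (a *: x + y)
}.

Variable S : set V.
Hypothesis subS : subspace S.

Lemma subspaceD x y : S x -> S y -> S (x + y).
Proof. by move=> Sx Sy; rewrite -[x]scale1r; apply: (subspaceP subS). Qed.

Lemma subspaceB x y : S x -> S y -> S (x - y).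
Proof. by move=> Sx Sy; rewrite addrC -scaleN1r; apply: (subspaceP subS). Qed.

End Subspace.

Section LinearSections.
Variables (R : fieldType) (V : lmodType R).
Implicit Types (F W : set V) (L : {linear V -> V}).

Definition section_on F L (s : V -> V) : Prop :=
  [/\ forall x, F x -> F (s (L x)), forall x, F x -> L (s (L x)) = L x &
      forall a x y, F x -> F y -> s (L (a *: x + y)) = a *: s (L x) + s (L y)].

Lemma section_on0 F L s : subspace F -> section_on F L s -> s 0 = 0.
Proof.
move=> [F0 _] [_ _ sL]; have := sL 1 0 0 F0 F0.
by rewrite !scale1r addr0 linear0 -{1}[s 0]addr0 => /addrI <-.
Qed.

Definition kernel_free F L := forall x, F x -> L x = 0 -> x = 0.

Lemma kernel_free_inj F L x y :
  subspace F -> kernel_free F L -> F x -> F y -> L x = L y -> x = y.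
Proof.
move=> subF kerF Fx Fy Lxy; apply/eqP; rewrite -subr_eq0; apply/eqP.
by apply: kerF; [apply: subspaceB | rewrite linearB Lxy subrr].
Qed.

Definition kernel_free_extension F W L A :=
  [/\ subspace A, W `<=` A, A `<=` F & kernel_free A L].

Lemma exists_maximal_kernel_free_extension F W L :
  kernel_free_extension F W L W -> exists A, kernel_free_extension F W L A /\
    forall B, A `<` B -> ~ kernel_free_extension F W L B.
Proof.
move=> extW; have [[W0 _] _ _ _] := extW.
pose P A := A = set0 \/ kernel_free_extension F W L A.
(* [set0] is admitted only so that [Zorn_bigcup] also covers the empty chain. *)
have [A [[A0|extA] Amax]] : exists A, P A /\ forall B, A `<` B -> ~ P B.
  apply: Zorn_bigcup => C CP Ctot.
  have [[X0 CX0 [x0 X0x0]]|Cempty] := EM (exists2 X, C X & X !=set0); last first.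
    left; apply/seteqP; split=> // x [X CX Xx].
    by apply: Cempty; exists X => //; exists x.
  have extC X x : C X -> X x -> kernel_free_extension F W L X.
    by move=> CX Xx; case: (CP X CX) => // X_0; rewrite X_0 in Xx.
  have [_ WX0 _ _] := extC X0 x0 CX0 X0x0.
  right; split; [split|..].
  - by exists X0 => //; exact: WX0.
  - move=> a x y [X CX Xx] [Y CY Yy].
    have [XY|YX] := Ctot X Y CX CY.
      have [[_ YP] _ _ _] := extC Y y CY Yy.
      by exists Y => //; apply: YP => //; apply: XY.
    have [[_ XP] _ _ _] := extC X x CX Xx.
    by exists X => //; apply: XP => //; apply: YX.
  - by move=> w Ww; exists X0 => //; apply: WX0.
  - by move=> x [X CX Xx]; have [_ _ XF _] := extC X x CX Xx; apply: XF.
  - by move=> x [X CX Xx]; have [_ _ _ kerX] := extC X x CX Xx; apply: kerX.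
  exfalso; apply: (Amax W); last by right.
  by rewrite A0; split=> // /(_ 0 W0).
by exists A; split=> // B AB extB; apply: (Amax B AB); right.
Qed.

(* A maximal kernel-free extension [A] satisfies [L A = L F]: otherwise
   adjoining any [x] with [L x \notin L A] would keep it kernel-free. *)
Lemma exists_kernel_free_complement F W L :
  subspace F -> kernel_free_extension F W L W ->
  exists2 A, kernel_free_extension F W L A &
    forall x, F x -> exists2 a, A a & L a = L x.
Proof.
move=> subF extW; have [A [extA Amax]] := exists_maximal_kernel_free_extension extW.
have [subA WA AF kerA] := extA.
exists A => // x Fx; apply: contrapT => LxA.
pose B z := exists a b, A a /\ z = a + b *: x.
have AB : A `<=` B by move=> a Aa; exists a, 0; rewrite scale0r addr0.
apply: (Amax B); last split.
- split=> [//|BA]; apply: LxA; exists x => //; apply: (BA x).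
  by exists 0, 1; rewrite add0r scale1r; split; first exact: (subspace0 subA).
- split; first exact: (AB 0 (subspace0 subA)).
  move=> c _ _ [a [b [Aa ->]]] [a' [b' [Aa' ->]]].
  exists (c *: a + a'), (c * b + b'); split; first exact: subspaceP.
  by rewrite scalerDr scalerDl scalerA addrACA.
- by move=> w /WA /AB.
- move=> _ [a [b [Aa ->]]]; rewrite addrC -[b *: x]addr0 -addrA add0r.
  by apply: (subspaceP subF) => //; apply: (AF a).
- move=> _ [a [b [Aa ->]]]; rewrite linearD linearZ_LR.
  have [-> Lab|b0 Lab] := eqVneq b 0.
    by rewrite !scale0r !addr0 in Lab *; apply: (kerA a Aa Lab).
  exfalso; apply: LxA; exists (- b^-1 *: a).
    by rewrite -[_ *: a]addr0; apply: (subspaceP subA) => //; apply: subspace0.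
  move/eqP: Lab; rewrite addr_eq0 => /eqP La.
  by rewrite linearZ_LR La scalerN scaleNr opprK scalerA mulVf // scale1r.
Qed.

Lemma exists_section_on_extending F W L :
  subspace F -> kernel_free_extension F W L W ->
  exists s, section_on F L s /\ forall w, W w -> s (L w) = w.
Proof.
move=> subF extW; have [_ _ WF _] := extW.
have [A [subA WA AF kerA] LA] := exists_kernel_free_complement subF extW.
have /choice[s sP] y : exists a, (exists2 x, F x & L x = y) -> A a /\ L a = y.
  have [[x Fx <-]|nFy] := EM (exists2 x, F x & L x = y); last by exists 0 => /nFy.
  by have [a Aa Lax] := LA x Fx; exists a.
have sA x : F x -> A (s (L x)) /\ L (s (L x)) = L x.
  by move=> Fx; apply: sP; exists x.
have sE x a : F x -> A a -> L a = L x -> s (L x) = a.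
  move=> Fx Aa Lax; have [Asx Lsx] := sA x Fx.
  by apply: (kernel_free_inj subA kerA) => //; rewrite Lsx.
exists s; split; [split|].
- by move=> x /sA[/AF].
- by move=> x /sA[].
- move=> a x y Fx Fy; apply: sE; first exact: (subspaceP subF).
    by apply: (subspaceP subA); [case: (sA x Fx) | case: (sA y Fy)].
  by rewrite !linearD !linearZ_LR (sA x Fx).2 (sA y Fy).2.
- by move=> w Ww; apply: sE; [exact: (WF w Ww) | exact: (WA w Ww) |].
Qed.

Lemma exists_section_on F L : subspace F -> exists s, section_on F L s.
Proof.
move=> subF; have ext0 : kernel_free_extension F [set 0] L [set 0].
  split=> //; first by split=> // a x y -> ->; rewrite scaler0 addr0.
  by move=> x ->; apply: subspace0.
by have [s [sF _]] := exists_section_on_extending subF ext0; exists s.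
Qed.

Lemma exists_section_on_compatible F F' L s :
  subspace F -> subspace F' -> F `<=` F' -> section_on F L s ->
  exists s', section_on F' L s' /\ forall x, F x -> s' (L x) = s (L x).
Proof.
move=> subF subF' FF' hs; have [sF sL slin] := hs.
pose W w := exists2 x, F x & w = s (L x).
have extW : kernel_free_extension F' W L W.
  split=> //.
  - split; first by exists 0; [apply: subspace0 | rewrite linear0 (section_on0 subF hs)].
    move=> a _ _ [x Fx ->] [y Fy ->].
    by exists (a *: x + y); [apply: (subspaceP subF) | rewrite slin].
  - by move=> _ [x Fx ->]; apply/FF'/sF.
  - by move=> _ [x Fx ->]; rewrite sL // => ->; apply: section_on0 hs.
have [s' [s'F s'W]] := exists_section_on_extending subF' extW.
by exists s'; split=> // x Fx; rewrite -{1}(sL x Fx) s'W //; exists x.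
Qed.

End LinearSections.

Section Isomorphisms.
Variables (R : fieldType) (V : lmodType R).
Implicit Types (S T Z B TZ TB : set V) (f : V -> V).

Definition lin_iso_via S T f : Prop :=
  [/\ forall (a : R) (x y : V), S x -> S y -> f (a *: x + y) = a *: f x + f y,
      forall x, S x -> T (f x),
      forall x y, S x -> S y -> f x = f y -> x = y &
      forall z, T z -> exists2 x, S x & f x = z].

Lemma lin_iso_viaP S T f : lin_iso_via S T f -> lin_iso S T.
Proof. by exists f. Qed.

Lemma quot_iso_of_lin_iso_via Z B TZ TB f :
  subspace Z -> TB 0 -> lin_iso_via Z TZ f ->
  (forall x, Z x -> B x <-> TB (f x)) -> quot_iso Z B TZ TB.
Proof.
move=> subZ TB0 [flin fZ _ fsurj] fB; exists f; split=> //.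
- by move=> a x y Zx Zy; rewrite flin // subrr.
- move=> x y Zx Zy; have Zxy : Z (- 1 *: y + x) by apply: (subspaceP subZ).
  by move: (fB _ Zxy); rewrite flin // !scaleN1r ![- _ + _]addrC.
- by move=> z /fsurj[x Zx <-]; exists x; rewrite // subrr.
Qed.

End Isomorphisms.

Section GradedProjections.
Variables (R : fieldType) (V : lmodType R) (e : int -> int -> {linear V -> V}).

Record graded_projections : Prop := GradedProjections {
  proj_neg : forall (p q : int) (x : V), (p < 0) || (q < 0) -> e p q x = 0;
  proj_orth : forall (p q p' q' : int) (x : V),
    e p q (e p' q' x) = if (p == p') && (q == q') then e p q x else 0;
  proj_decomp : forall x : V, exists n : nat,
    x = \sum_(i < n) \sum_(j < n) e (nat_of_ord i)%:Z (nat_of_ord j)%:Z x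
}.

Hypothesis He : graded_projections.

Lemma projK p q x : e p q (e p q x) = e p q x.
Proof. by rewrite (proj_orth He) !eqxx. Qed.

Lemma proj_inC p q a b x : inC e a b x -> (p != a) || (q != b) -> e p q x = 0.
Proof.
by rewrite /inC => <-; rewrite (proj_orth He) -negb_and; case: (_ && _).
Qed.

Lemma proj_eq0 x : (forall i j, e i j x = 0) -> x = 0.
Proof.
move=> x0; have [n ->] := proj_decomp He x.
by rewrite big1 // => i _; rewrite big1.
Qed.

Lemma inCk_subspace k : subspace (inCk e k).
Proof.
split=> [p q _|a x y Cx Cy p q pq]; first by rewrite linear0.
by rewrite linearP /= Cx // Cy // scaler0 addr0.
Qed.

Lemma inCk_inC k p q x : p + q = k -> inC e p q x -> inCk e k x.
Proof.
move=> pqk Cx a b abk; apply: proj_inC Cx _; rewrite -negb_and.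
by apply: contra abk => /andP[/eqP-> /eqP->]; rewrite pqk.
Qed.

Lemma inCk_proj k p q x : p + q = k -> inCk e k (e p q x).
Proof. by move=> pqk; apply: inCk_inC pqk _; apply: projK. Qed.

Definition qdeg_le (q : int) (x : V) : Prop := forall i j, q < j -> e i j x = 0.

Lemma qdeg_le_subspace q : subspace (qdeg_le q).
Proof.
split=> [i j _|a x y hx hy i j qj]; first by rewrite linear0.
by rewrite linearP /= hx // hy // scaler0 addr0.
Qed.

Lemma qdeg_leW q q' x : q <= q' -> qdeg_le q x -> qdeg_le q' x.
Proof. by move=> qq' hx i j q'j; apply: hx; apply: le_lt_trans q'j. Qed.

Lemma qdeg_le_inC p q q' x : inC e p q x -> q <= q' -> qdeg_le q' x.
Proof.
move=> Cx qq' i j q'j; apply: proj_inC Cx _.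
by rewrite orbC gt_eqF ?(le_lt_trans qq').
Qed.

Lemma qdeg_le_eq0 x : qdeg_le (-1) x -> x = 0.
Proof.
move=> hx; apply: proj_eq0 => i j; have [j0|j0] := ltP j 0.
  by apply: (proj_neg He); rewrite j0 orbT.
by apply: hx; apply: lt_le_trans j0.
Qed.

Lemma inCk_qdeg_le k x : inCk e k x -> qdeg_le `|k|%:Z x.
Proof.
move=> Cx i j kj; have [i0|i0] := ltP i 0; first by apply: (proj_neg He); rewrite i0.
by apply: Cx; apply/eqP; lia.
Qed.

Lemma qdeg_le_pred k q x :
  inCk e k x -> qdeg_le q x -> e (k - q) q x = 0 -> qdeg_le (q - 1) x.
Proof.
move=> Cx hx lead0 i j qj; have [jq|qj'|->] := ltgtP j q.
- lia.
- exact: hx.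
- have [->|ikq] := eqVneq i (k - q) => //.
  by apply: Cx; apply: contra ikq => /eqP <-; rewrite addrK.
Qed.

Lemma is_proj_lead k p q x u : inCk e k x -> p + q = k ->
  is_proj e q x (e p q u) <-> qdeg_le q x /\ e p q x = e p q u.
Proof.
move=> Cx pqk; split.
  move=> [_ hx]; split.
    move=> i j qj; have := hx i j (ltW qj).
    by rewrite linearB /= (proj_inC (projK p q u)) ?subr0 // orbC gt_eqF.
  by have := hx p q (lexx q); rewrite linearB /= projK => /subr0_eq.
move=> [hx xu]; split.
  by move=> i j jq; apply: proj_inC (projK p q u) _; rewrite orbC lt_eqF.
move=> i j qj; rewrite linearB /=; have [->|ji] := eqVneq j q.
  have [->|ip] := eqVneq i p; first by rewrite projK xu subrr.
  rewrite (proj_inC (projK p q u)) ?ip // subr0.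
  by apply: Cx; apply: contra ip => /eqP iqk; apply/eqP; lia.
rewrite hx; last by rewrite lt_neqAle eq_sym ji.
by rewrite (proj_inC (projK p q u)) ?subr0 // ji orbT.
Qed.

Lemma dsum_subspace (T : int -> set V) k :
  (forall q, subspace (T q)) -> subspace (dsum e T k).
Proof.
move=> subT; split.
  split=> [|p q _]; first exact: subspace0 (inCk_subspace k).
  by rewrite linear0; apply: subspace0.
move=> a x y [Cx Tx] [Cy Ty]; split; first exact: (subspaceP (inCk_subspace k)).
by move=> p q pqk; rewrite linearP; apply: (subspaceP (subT q)); [apply: Tx | apply: Ty].
Qed.

Lemma dsum_proj (T : int -> set V) k p q t :
  (forall q', T q' 0) -> p + q = k -> dsum e T k t -> dsum e T k (e p q t).
Proof.
move=> T0 pqk [Ct Tt]; split; first exact: inCk_proj.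
move=> p' q' pqk'; rewrite (proj_orth He).
by case: ifP => [/andP[/eqP-> /eqP->]|_]; [apply: Tt | apply: T0].
Qed.

Lemma eq_dsum (T T' : int -> set V) k :
  (forall p q u, p + q = k -> T q (e p q u) <-> T' q (e p q u)) ->
  dsum e T k = dsum e T' k.
Proof.
move=> TT'; apply/funext => x; apply/propext.
by split=> -[Cx Tx]; split=> // p q pqk; apply/(TT' p q x pqk); apply: Tx.
Qed.


Section Filtration.
Variables (k : int) (S : set V).
Hypotheses (subS : subspace S) (SC : S `<=` inCk e k).

Definition filt (q : int) (x : V) : Prop := S x /\ qdeg_le q x.
Definition lead (q : int) : {linear V -> V} := e (k - q) q.
Definition grade (q : int) (y : V) : Prop := exists2 x, filt q x & lead q x = y.

Lemma filt_subspace q : subspace (filt q).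
Proof.
split; first by split; [apply: subspace0 | apply: subspace0 (qdeg_le_subspace q)].
move=> a x y [Sx hx] [Sy hy].
by split; [apply: (subspaceP subS) | apply: (subspaceP (qdeg_le_subspace q))].
Qed.

Lemma filtW q q' x : q <= q' -> filt q x -> filt q' x.
Proof. by move=> qq' [Sx hx]; split=> //; apply: qdeg_leW hx. Qed.

Lemma filt_top x : S x -> filt `|k|%:Z x.
Proof. by move=> Sx; split=> //; apply/inCk_qdeg_le/SC. Qed.

Lemma grade_subspace q : subspace (grade q).
Proof.
have subF := filt_subspace q.
split; first by exists 0; [apply: subspace0 | rewrite linear0].
move=> a _ _ [x Fx <-] [y Fy <-].
by exists (a *: x + y); [apply: (subspaceP subF) | rewrite linearP].
Qed.

Variable s : int -> V -> V.
Hypothesis s_sec : forall q, section_on (filt q) (lead q) (s q).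

Lemma filt_peel q x : filt q x -> filt (q - 1) (x - s q (lead q x)).
Proof.
move=> Fx; have [sF sL _] := s_sec q.
have Fx' := subspaceB (filt_subspace q) Fx (sF x Fx).
split; first by case: Fx'.
apply: qdeg_le_pred (SC (proj1 Fx')) (proj2 Fx') _.
by rewrite -/(lead q x) linearB /= sL // subrr.
Qed.

Fixpoint to_graded (n : nat) (x : V) : V :=
  if n is n'.+1 then lead n' x + to_graded n' (x - s n' (lead n' x)) else 0.

Lemma to_gradedP n x : filt (n%:Z - 1) x ->
  dsum e grade k (to_graded n x) /\ qdeg_le (n%:Z - 1) (to_graded n x).
Proof.
elim: n x => [|n IH] x Fx /=.
  split=> [|i j _]; last by rewrite linear0.
  exact: subspace0 (dsum_subspace k grade_subspace).
have Fnx : filt n x by apply: filtW Fx; lia.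
have [[Ct Gt] ht] := IH _ (filt_peel Fnx).
have Clead : inCk e k (lead n x) by apply: inCk_proj; rewrite subrK.
split; [split|].
- exact: (subspaceD (inCk_subspace k) Clead Ct).
- move=> p q pqk; rewrite linearD /=; have [qn|qn] := eqVneq q n%:Z.
    have -> : p = k - n%:Z by lia.
    by rewrite qn projK ht ?addr0 //; [exists x | lia].
  rewrite (proj_inC (projK _ _ _)) ?qn ?orbT // add0r; exact: Gt.
- move=> i j nj; rewrite linearD /= ht; last lia.
  by rewrite (proj_inC (projK _ _ _)) ?addr0 // orbC gt_eqF //; lia.
Qed.

Lemma to_graded_linear n a x y : filt (n%:Z - 1) x -> filt (n%:Z - 1) y ->
  to_graded n (a *: x + y) = a *: to_graded n x + to_graded n y.
Proof.
elim: n x y => [|n IH] x y Fx Fy /=; first by rewrite scaler0 addr0.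
have Fnx : filt n x by apply: filtW Fx; lia.
have Fny : filt n y by apply: filtW Fy; lia.
have [_ _ slin] := s_sec n.
rewrite slin // linearP /= scalerDr addrACA -IH; try exact: filt_peel.
by rewrite scalerBr opprD addrACA.
Qed.

Lemma to_graded_eq0 n x : filt (n%:Z - 1) x -> to_graded n x = 0 -> x = 0.
Proof.
elim: n x => [|n IH] x Fx /=; first by case: Fx => _ /qdeg_le_eq0.
have Fnx : filt n x by apply: filtW Fx; lia.
have [_ ht] := to_gradedP (filt_peel Fnx).
move=> tx0; have lead0 : lead n x = 0.
  have := congr1 (lead n) tx0.
  by rewrite linearD /= projK ht ?addr0 ?linear0 //; lia.
move: (filt_peel Fnx) tx0.
by rewrite lead0 (section_on0 (filt_subspace n) (s_sec n)) add0r subr0; apply: IH.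
Qed.

Lemma to_graded_surj n t : dsum e grade k t -> qdeg_le (n%:Z - 1) t ->
  exists2 x, filt (n%:Z - 1) x & to_graded n x = t.
Proof.
have subT := dsum_subspace k grade_subspace.
elim: n t => [|n IH] t Tt ht.
  by exists 0; [apply: subspace0 (filt_subspace _) | rewrite (qdeg_le_eq0 ht)].
have [sF sL _] := s_sec n.
have [x0 Fx0 x0y] := proj2 Tt (k - n%:Z) n (subrK _ _).
set y := e (k - n%:Z) n t in x0y.
have Ty : dsum e grade k y.
  by apply: dsum_proj (subrK _ _) Tt => q; apply: subspace0 (grade_subspace q).
have Tt' := subspaceB subT Tt Ty.
have [|x' Fx' x't'] := IH (t - y) Tt'.
  apply: qdeg_le_pred (proj1 Tt') _ _; last by rewrite linearB /= projK subrr.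
  apply: (subspaceB (qdeg_le_subspace n)); first by apply: qdeg_leW ht; lia.
  exact: qdeg_le_inC (projK _ _ _) (lexx _).
have Fnx' : filt n x' by apply: filtW Fx'; lia.
have lead_x' : lead n x' = 0 by apply: (proj2 Fx'); lia.
exists (x' + s n y).
  by rewrite -x0y; apply: filtW (subspaceD (filt_subspace n) Fnx' (sF _ Fx0)); lia.
have lead_x : lead n (x' + s n y) = y by rewrite linearD /= lead_x' add0r -x0y sL.
by rewrite /= lead_x addrK x't' addrC subrK.
Qed.

Lemma lin_iso_via_graded : lin_iso_via S (dsum e grade k) (to_graded `|k|.+1).
Proof.
have top : `|k|.+1%:Z - 1 = `|k|%:Z by lia.
have FS x : S x -> filt (`|k|.+1%:Z - 1) x by rewrite top; apply: filt_top.
split.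
- by move=> a x y Sx Sy; apply: to_graded_linear; apply: FS.
- by move=> x /FS /to_gradedP[].
- move=> x y Sx Sy txy; apply/eqP; rewrite -subr_eq0 addrC -scaleN1r; apply/eqP.
  apply: (to_graded_eq0 (subspaceP (filt_subspace _) _ (FS y Sy) (FS x Sx))).
  by rewrite to_graded_linear ?txy ?scaleN1r ?addNr //; apply: FS.
- move=> t Tt; have [|x [Sx _] <-] := to_graded_surj (n := `|k|.+1) Tt; last by exists x.
  by rewrite top; apply/inCk_qdeg_le/(proj1 Tt).
Qed.

End Filtration.

Lemma exists_compatible_sections k (B Z : set V) :
  subspace B -> subspace Z -> B `<=` Z ->
  exists sB sZ, [/\ forall q, section_on (filt B q) (lead k q) (sB q),
    forall q, section_on (filt Z q) (lead k q) (sZ q) &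
    forall q x, filt B q x -> sZ q (lead k q x) = sB q (lead k q x)].
Proof.
move=> subB subZ BZ.
have /choice[sB sB_sec] q : exists s, section_on (filt B q) (lead k q) s.
  exact/exists_section_on/filt_subspace.
have /choice[sZ sZ_sec] q : exists s, section_on (filt Z q) (lead k q) s /\
    forall x, filt B q x -> s (lead k q x) = sB q (lead k q x).
  apply: exists_section_on_compatible (sB_sec q); try exact: filt_subspace.
  by move=> x [/BZ Zx hx].
by exists sB, sZ; split=> q; case: (sZ_sec q).
Qed.

Section GradedQuotient.
Variables (k : int) (B Z : set V) (sB sZ : int -> V -> V).
Hypotheses (subB : subspace B) (subZ : subspace Z).
Hypotheses (BZ : B `<=` Z) (ZC : Z `<=` inCk e k).
Hypotheses (sB_sec : forall q, section_on (filt B q) (lead k q) (sB q))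
  (sZ_sec : forall q, section_on (filt Z q) (lead k q) (sZ q))
  (sZB : forall q x, filt B q x -> sZ q (lead k q x) = sB q (lead k q x)).

Let BC : B `<=` inCk e k := fun x Bx => ZC (BZ Bx).

Lemma to_graded_compat n x :
  filt B (n%:Z - 1) x -> to_graded k sZ n x = to_graded k sB n x.
Proof.
elim: n x => [|n IH] x Fx //=.
have Fnx : filt B n x by apply: filtW Fx; lia.
by rewrite sZB // IH //; apply: filt_peel Fnx.
Qed.

Lemma quot_iso_graded :
  quot_iso Z B (dsum e (grade k Z) k) (dsum e (grade k B) k).
Proof.
have isoB := lin_iso_via_graded subB BC sB_sec.
have isoZ := lin_iso_via_graded subZ ZC sZ_sec.
have [_ TB _ surjB] := isoB; have [_ _ injZ _] := isoZ.
have compat x : B x -> to_graded k sZ `|k|.+1 x = to_graded k sB `|k|.+1 x.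
  move=> Bx; apply: to_graded_compat.
  by rewrite (_ : _ - 1 = `|k|%:Z); [apply: filt_top | lia].
apply: quot_iso_of_lin_iso_via subZ _ isoZ _.
  exact: (subspace0 (dsum_subspace k (grade_subspace k subB))).
move=> x Zx; split=> [Bx|/surjB[b Bb tb]]; first by rewrite compat //; apply: TB.
have <- : b = x by apply: injZ => //; [apply: BZ | rewrite compat].
exact: Bb.
Qed.

End GradedQuotient.

End GradedProjections.

Section Bicomplex.
Variables (R : fieldType) (V : lmodType R) (e : int -> int -> {linear V -> V}).
Variables d21 d10 d01 : {linear V -> V}.
Hypothesis H : bigraded_complex e d21 d10 d01.

Lemma bigraded_complex_projections : graded_projections e.
Proof. by case: H; split. Qed.

Let He := bigraded_complex_projections.
Local Notation D := (Dtot d21 d10 d01).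
Local Notation Bk := (Bk e d21 d10 d01).
Local Notation Zk := (Zk e d21 d10 d01).

HB.instance Definition _ := GRing.Linear.copy D (d21 \+ d10 \+ d01).

Lemma proj_Dtot_off_degree (p q i j : int) x :
  p + q != i + j + 1 -> e p q (D (e i j x)) = 0.
Proof.
move=> pqij; have off a b : a + b = i + j + 1 -> (p != a) || (q != b).
  move=> abij; rewrite -negb_and.
  by apply: contra pqij => /andP[/eqP-> /eqP->]; rewrite abij.
rewrite /Dtot !linearD /= (proj_inC He (bc_d21 H _ _ _)); last by apply: off; lia.
rewrite (proj_inC He (bc_d10 H _ _ _)); last by apply: off; lia.
by rewrite (proj_inC He (bc_d01 H _ _ _)) ?addr0 //; apply: off; lia.
Qed.

Lemma inCk_Dtot k x : inCk e k x -> inCk e (k + 1) (D x).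
Proof.
move=> Cx p q pqk; have [n ->] := proj_decomp He x.
rewrite !linear_sum big1 // => i _; rewrite !linear_sum big1 // => j _.
have [ijk|ijk] := eqVneq (i%:Z + j%:Z) k.
  by apply: proj_Dtot_off_degree; rewrite ijk.
by rewrite Cx // !linear0.
Qed.

Lemma Bk_subspace k : subspace (Bk k).
Proof.
split.
  by exists 0; split; [exact: (subspace0 (inCk_subspace e _)) | rewrite linear0].
move=> a _ _ [x [Cx ->]] [y [Cy ->]]; exists (a *: x + y).
by split; [apply: (subspaceP (inCk_subspace e _)) | rewrite linearP].
Qed.

Lemma Bk_inCk k : Bk k `<=` inCk e k.
Proof. by move=> _ [x [Cx ->]]; rewrite -(subrK 1 k); apply: inCk_Dtot. Qed.

Lemma Zk_subspace k : subspace (Zk k).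
Proof.
split; first by split; [apply: (subspace0 (inCk_subspace e _)) | rewrite linear0].
move=> a x y [Cx Dx] [Cy Dy]; split; first exact: (subspaceP (inCk_subspace e _)).
by rewrite linearP /= Dx Dy scaler0 addr0.
Qed.

Lemma Bk_Zk k : Bk k `<=` Zk k.
Proof.
by move=> x Bx; split; [apply: Bk_inCk | case: Bx => y [_ ->]; apply: (bc_DD H)].
Qed.

Lemma Bq_grade k p q u : p + q = k ->
  Bq e d21 d10 d01 k q (e p q u) <-> grade e k (Bk k) q (e p q u).
Proof.
move=> pqk; have {p pqk}-> : p = k - q by lia.
have lead_iff x (Bx : Bk k x) := is_proj_lead He u (Bk_inCk Bx) (subrK q k).
split=> [[x [Bx /(lead_iff x Bx)[hx xu]]]|[x [Bx hx] xu]]; first by exists x.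
by exists x; split=> //; apply/lead_iff.
Qed.

(* The components of [D eta] below degree [m] are boundaries of elements of
   the [N^{p,j}], whose differentials have no other components. *)
Lemma exists_lower_primitive k eta : MM e d21 d10 d01 k eta -> forall m : nat,
  exists w, [/\ inCk e k w, qdeg_le e (m%:Z - 1) w &
    forall i j, e i j (D w) = if j < m%:Z then e i j (D eta) else 0].
Proof.
move=> [Ceta hBN]; elim=> [|m [w [Cw hw Dw]]].
  exists 0; split=> [|i j _|i j]; rewrite ?linear0 //.
    exact: (subspace0 (inCk_subspace e k)).
  by case: ifP => // j0; rewrite (proj_neg He) // j0 orbT.
have [n [[nC _] nD]] := hBN (k + 1 - m%:Z) m%:Z (subrK _ _).
exists (w + n); split.
- by apply: (subspaceD (inCk_subspace e k) Cw); apply: (inCk_inC He _ nC); lia.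
- rewrite (_ : m.+1%:Z - 1 = m%:Z); last by lia.
  apply: (subspaceD (qdeg_le_subspace e m)); first by apply: qdeg_leW hw; lia.
  exact: (qdeg_le_inC He nC (lexx _)).
- move=> i j; rewrite [D _]linearD linearD /= Dw -nD (proj_orth He).
  have [jm|mj|->] := ltgtP j m%:Z.
  + have jm1 : j < m.+1%:Z by lia.
    by rewrite jm1 andbF addr0.
  + have jm1 : (j < m.+1%:Z) = false by apply/negbTE; rewrite -leNgt; lia.
    by rewrite jm1 andbF addr0.
  + rewrite add0r andbT (_ : m%:Z < m.+1%:Z); last by lia.
    case: eqVneq => [->|ikm] //; apply/esym/(inCk_Dtot Ceta).
    by apply: contra ikm => /eqP ?; apply/eqP; lia.
Qed.

Lemma MM_lead_in_grade k (m : nat) eta :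
  MM e d21 d10 d01 k eta -> is_proj e m (D eta) 0 -> qdeg_le e m eta ->
  grade e k (Zk k) m (e (k - m%:Z) m eta).
Proof.
move=> Meta [_ Deta] heta; have [w [Cw hw Dw]] := exists_lower_primitive Meta m.
exists (eta - w); last by rewrite /lead linearB /= hw ?subr0 //; lia.
split; last by apply: (subspaceB (qdeg_le_subspace e m) heta); apply: qdeg_leW hw; lia.
split; first exact: (subspaceB (inCk_subspace e k) (proj1 Meta) Cw).
apply: (proj_eq0 He) => i j; rewrite [D _]linearB linearB /= Dw.
by case: ltP => [_|mj]; rewrite ?subrr // -[D eta]subr0 Deta ?subr0.
Qed.

Lemma Zq_grade k p q u : p + q = k ->
  Zq e d21 d10 d01 k q (e p q u) <-> grade e k (Zk k) q (e p q u).
Proof.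
move=> pqk; have {p pqk}-> : p = k - q by lia.
have lead_iff x (Cx : inCk e k x) := is_proj_lead He u Cx (subrK q k).
split=> [[eta [Meta [Deta /(lead_iff _ (proj1 Meta))[heta <-]]]]|[x [[Cx Dx] hx] xu]].
  have [q0|/gez0_abs qE] := ltP q 0.
    rewrite (proj_neg He) ?q0 ?orbT //.
    exact: (subspace0 (grade_subspace e k (Zk_subspace k) q)).
  by rewrite -qE in Deta heta *; apply: MM_lead_in_grade.
exists x; split; [|split].
- split=> // i j _; rewrite Dx linear0; exists 0; split; last by rewrite linear0.
  by split; [rewrite /inC | split]; rewrite linear0.
- by rewrite Dx; split=> i j _; rewrite ?subr0 linear0.
- exact/lead_iff.
Qed.

End Bicomplex.

Theorem corollary3p4 (R : fieldType) (V : lmodType R)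
    (e : int -> int -> {linear V -> V}) (d21 d10 d01 : {linear V -> V}) :
  bigraded_complex e d21 d10 d01 ->
  forall k : int,
    [/\ lin_iso (Bk e d21 d10 d01 k) (dsum e (Bq e d21 d10 d01 k) k),
        lin_iso (Zk e d21 d10 d01 k) (dsum e (Zq e d21 d10 d01 k) k) &
        quot_iso (Zk e d21 d10 d01 k) (Bk e d21 d10 d01 k)
                 (dsum e (Zq e d21 d10 d01 k) k) (dsum e (Bq e d21 d10 d01 k) k)].
Proof.
move=> H k; have He := bigraded_complex_projections H.
rewrite (eq_dsum (Bq_grade H (k := k))) (eq_dsum (Zq_grade H (k := k))).
have subB := Bk_subspace e d21 d10 d01 k; have subZ := Zk_subspace e d21 d10 d01 k.
have BZ := Bk_Zk H (k := k); have BC := Bk_inCk H (k := k).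
have ZC : Zk e d21 d10 d01 k `<=` inCk e k by move=> x [].
have [sB [sZ [sB_sec sZ_sec sZB]]] := exists_compatible_sections e k subB subZ BZ.
split.
- exact: lin_iso_viaP (lin_iso_via_graded He subB BC sB_sec).
- exact: lin_iso_viaP (lin_iso_via_graded He subZ ZC sZ_sec).
- exact: (quot_iso_graded He subB subZ BZ ZC sB_sec sZ_sec sZB).
Qed.
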